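(* For every $f\in\mathbf{Stp}$, the sets $$U^\Pi_f=\{h\in\mathbb N^{\mathbb N}: h^{[1]}\in[\![h^{[2]}]\!]^\Pi_f\},\qquad U^\Sigma_f=\{h\in\mathbb N^{\mathbb N}: h^{[1]}\in[\![h^{[2]}]\!]^\Sigma_f\}$$ satisfy $U^\Pi_f\in\Pi(\Sigma_{\alpha[f]}\mathcal A)$ and $U^\Sigma_f\in\Sigma(\Pi_{\alpha[f]}\mathcal A)$.
   Context: $\mathbb N=\{1,2,\dots\}$. $B^m_n=\{f\in\mathbb N^{\mathbb N}: f(n)=m\}$. $\mathcal A$ is the family of finite unions of finite intersections of sets of the form $B^m_n$ or $\mathbb N^{\mathbb N}\setminus B^m_n$. $\Pi(\mathcal X)$ (resp. $\Sigma(\mathcal X)$) denotes the family of countable intersections (resp. unions) of members of $\mathcal X$. Transfinitely: $\Pi_0\mathcal A=\Sigma_0\mathcal A=\mathcal A$, $\Pi_{\alpha+1}\mathcal A=\Pi(\Sigma_\alpha\mathcal A)$, $\Sigma_{\alpha+1}\mathcal A=\Sigma(\Pi_\alpha\mathcal A)$, and at limits $\lambda$ the unions over $\alpha<\lambda$. Fix any bijection $\langle\cdot,\cdot\rangle:\mathbb N\times\mathbb N\to\mathbb N\setminus\{1\}$, and put $\langle\,\rangle=1$, $\langle a_1\cdots a_n\rangle=\langle a_1,\langle a_2\cdots a_n\rangle\rangle$ (a bijection from finite tuples onto $\mathbb N$). For $k\in\mathbb N$: $[\![k]\!]^{\mathcal S'}=\mathbb N^{\mathbb N}\setminus B^m_n$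 if $k=\langle1mn\rangle$, $=B^m_n$ if $k=\langle2mn\rangle$, $=\emptyset$ otherwise; for $k=\langle a_1\cdots a_K\rangle$, $[\![k]\!]^{\mathcal S'_\cap}=\bigcap_{i\le K}[\![a_i]\!]^{\mathcal S'}$ (empty intersection $\mathbb N^{\mathbb N}$) and $[\![k]\!]^{\mathcal A}=\bigcup_{i\le K}[\![a_i]\!]^{\mathcal S'_\cap}$ (empty union $\emptyset$). $f^{[n]}(m)=f(\langle n,m\rangle)$. Stumps $\mathbf{Stp}\subseteq\mathbb N^{\mathbb N}$: inductively, $f\in\mathbf{Stp}$ if $f(1)\ne1$, or if $f(1)=1$ and all $f^{[n]}\in\mathbf{Stp}$. Ordinal $\alpha[f]$: $0$ if $f(1)\neq1$, and $\sup_n(\alpha[f^{[n]}]+1)$ if $f(1)=1$. For $f\in\mathbf{Stp}$, $g\in\mathbb N^{\mathbb N}$: if $f(1)\ne1$, $[\![g]\!]^\Pi_f=\bigcap_{n\ge2}[\![g(n)]\!]^{\mathcal A}$, $[\![g]\!]^\Sigma_f=\bigcup_{n\ge2}[\![g(n)]\!]^{\mathcal A}$; if $f(1)=1$, $[\![g]\!]^\Pi_f=\bigcap_n[\![g^{[n]}]\!]^\Sigma_{f^{[n]}}$, $[\![g]\!]^\Sigma_f=\bigcup_n[\![g^{[n]}]\!]^\Pi_{f^{[n]}}$. *)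

(* N = {1,2,...} is modelled by Stdlib's [positive];
   Baire space N^N is [positive -> positive]. *)
From Stdlib Require Import PArith List.
Import ListNotations.
Open Scope positive_scope.

Definition Baire := positive -> positive.
Definition bset := Baire -> Prop.
Definition bclass := bset -> Prop.

Definition seteq (X Y : bset) : Prop := forall x, X x <-> Y x.

Definition PiC (C : bclass) : bclass := fun Y =>
  exists Z : nat -> bset, (forall k, C (Z k)) /\ seteq Y (fun x => forall k, Z k x).
Definition SigC (C : bclass) : bclass := fun Y =>
  exists Z : nat -> bset, (forall k, C (Z k)) /\ seteq Y (fun x => exists k, Z k x).

(* literal (b,m,n): b = true means B^m_n, b = false means its complement *)
Definition lit_sem (l : bool * positive * positive) (x : Baire) : Prop :=
  match l with
  | (true, m, n) => x n = m
  | (false, m, n) => x n <> m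
  end.

Definition AClass : bclass := fun Y =>
  exists L : list (list (bool * positive * positive)),
    seteq Y (fun x => Exists (fun c => Forall (fun l => lit_sem l x) c) L).

(* countable ordinals as Brouwer trees; a limit node is the sup of its sequence *)
Inductive ord : Type :=
| OZ : ord
| OS : ord -> ord
| OL : (positive -> ord) -> ord.

Fixpoint hier (a : ord) : bclass * bclass :=
  match a with
  | OZ => (AClass, AClass)
  | OS b => (PiC (snd (hier b)), SigC (fst (hier b)))
  | OL s => ((fun Y => exists n, fst (hier (s n)) Y),
             (fun Y => exists n, snd (hier (s n)) Y))
  end.
Definition PiH (a : ord) : bclass := fst (hier a).
Definition SigH (a : ord) : bclass := snd (hier a).

Definition is_pairing (p : positive -> positive -> positive) : Prop :=
  (forall a b, p a b <> 1) /\
  (forall a b c d, p a b = p c d -> a = c /\ b = d) /\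
  (forall k, k <> 1 -> exists a b, p a b = k).

Section Coding.
Variable p : positive -> positive -> positive.

Fixpoint code (l : list positive) : positive :=
  match l with
  | [] => 1
  | a :: s => p a (code s)
  end.

Definition semSp (k : positive) : bset := fun x =>
  (exists m n, k = code [1; m; n] /\ x n <> m) \/
  (exists m n, k = code [2; m; n] /\ x n = m).

Definition semSi (k : positive) : bset := fun x =>
  exists l, code l = k /\ Forall (fun a => semSp a x) l.

Definition semA (k : positive) : bset := fun x =>
  exists l, code l = k /\ Exists (fun a => semSi a x) l.

Definition sub (f : Baire) (n : positive) : Baire := fun m => f (p n m).

Inductive Stp : Baire -> Prop :=
| Stp_leaf f : f 1 <> 1 -> Stp f
| Stp_node f : f 1 = 1 -> (forall n, Stp (sub f n)) -> Stp f.

Inductive alpha_rel : Baire -> ord -> Prop :=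
| alpha_leaf f : f 1 <> 1 -> alpha_rel f OZ
| alpha_node f (o : positive -> ord) :
    f 1 = 1 -> (forall n, alpha_rel (sub f n) (o n)) ->
    alpha_rel f (OL (fun n => OS (o n))).

(* piSem f g x : x \in [[g]]^Pi_f ;  sigSem f g x : x \in [[g]]^Sigma_f *)
Inductive piSem : Baire -> Baire -> Baire -> Prop :=
| pi_leaf f g x : f 1 <> 1 -> (forall n, n <> 1 -> semA (g n) x) -> piSem f g x
| pi_node f g x : f 1 = 1 -> (forall n, sigSem (sub f n) (sub g n) x) -> piSem f g x
with sigSem : Baire -> Baire -> Baire -> Prop :=
| sig_leaf f g x n : f 1 <> 1 -> n <> 1 -> semA (g n) x -> sigSem f g x
| sig_node f g x n : f 1 = 1 -> piSem (sub f n) (sub g n) x -> sigSem f g x.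

Definition UPi (f : Baire) : bset := fun h => piSem f (sub h 2) (sub h 1).
Definition USig (f : Baire) : bset := fun h => sigSem f (sub h 2) (sub h 1).
End Coding.

From Stdlib Require Import PArith List Cantor Classical.
Import ListNotations.

(* The induction on the stump is run for the more general sets
   {h | h∘ξ ∈ [[h∘γ]]^Π_f} and {h | h∘ξ ∈ [[h∘γ]]^Σ_f} with arbitrary
   coordinate maps ξ, γ; the theorem is the case ξ = ⟨1,·⟩, γ = ⟨2,·⟩.
   At a leaf, [[g]]^Π_f is the intersection over pairs (n, k) of the sets
   "g(n) = k implies x ∈ [[k]]^A", each a member of A because a code decodes
   uniquely and the class A is closed under finite Boolean combinations of
   literals and under substitution of coordinates.  At a node,
   g^[n] = h∘(γ∘⟨n,·⟩) is again a coordinate substitution, so the induction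
   hypothesis for f^[n] applies directly and one more countable
   intersection (union) raises the level from α[f^[n]] + 1 to α[f]. *)

Lemma PiC_countable {I : Type} (e : nat -> I) (C : bclass) (Y : bset) (Z : I -> bset) :
  (forall i, exists k, e k = i) -> (forall i, C (Z i)) ->
  seteq Y (fun x => forall i, Z i x) -> PiC C Y.
Proof.
  intros He HC HY. exists (fun k => Z (e k)). split; [intros k; apply HC|].
  intros x. rewrite (HY x). split; [intros H k; apply H|].
  intros H i. destruct (He i) as [k <-]. apply H.
Qed.

Lemma SigC_countable {I : Type} (e : nat -> I) (C : bclass) (Y : bset) (Z : I -> bset) :
  (forall i, exists k, e k = i) -> (forall i, C (Z i)) ->
  seteq Y (fun x => exists i, Z i x) -> SigC C Y.
Proof.
  intros He HC HY. exists (fun k => Z (e k)). split; [intros k; apply HC|].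
  intros x. rewrite (HY x). split; [|intros [k H]; eauto].
  intros [i H]. destruct (He i) as [k <-]. eauto.
Qed.

Lemma Pos_of_nat_surj (a : positive) : exists k, Pos.of_nat k = a.
Proof. exists (Pos.to_nat a). apply Pos2Nat.id. Qed.

Definition Pos_pair_of_nat (k : nat) : positive * positive :=
  (Pos.of_nat (fst (Cantor.of_nat k)), Pos.of_nat (snd (Cantor.of_nat k))).

Lemma Pos_pair_of_nat_surj (ab : positive * positive) : exists k, Pos_pair_of_nat k = ab.
Proof.
  destruct ab as [a b]. exists (Cantor.to_nat (Pos.to_nat a, Pos.to_nat b)).
  unfold Pos_pair_of_nat. rewrite Cantor.cancel_of_to. simpl. rewrite !Pos2Nat.id. reflexivity.
Qed.

Lemma A_ext (Y Y' : bset) : seteq Y Y' -> AClass Y -> AClass Y'.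
Proof. intros E [L HL]. exists L. intros x. rewrite <- (E x). apply HL. Qed.

Lemma A_False : AClass (fun _ => False).
Proof. exists []. intros x. rewrite Exists_nil. reflexivity. Qed.

Lemma A_True : AClass (fun _ => True).
Proof. exists [[]]. intros x. split; auto. Qed.

Lemma A_lit (l : bool * positive * positive) : AClass (lit_sem l).
Proof.
  exists [[l]]. intros x. rewrite Exists_cons, Exists_nil, Forall_cons_iff.
  split; [intros H; auto | intros [[H _]|[]]; exact H].
Qed.

Lemma A_or (Y1 Y2 : bset) : AClass Y1 -> AClass Y2 -> AClass (fun x => Y1 x \/ Y2 x).
Proof.
  intros [L1 H1] [L2 H2]. exists (L1 ++ L2). intros x.
  rewrite Exists_app, (H1 x), (H2 x). reflexivity.
Qed.

Lemma A_and (Y1 Y2 : bset) : AClass Y1 -> AClass Y2 -> AClass (fun x => Y1 x /\ Y2 x).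
Proof.
  intros [L1 H1] [L2 H2]. exists (flat_map (fun c1 => map (app c1) L2) L1). intros x.
  rewrite (H1 x), (H2 x), Exists_flat_map, !Exists_exists.
  setoid_rewrite Exists_map. setoid_rewrite Exists_exists. setoid_rewrite Forall_app.
  firstorder.
Qed.

Lemma A_Forall {T : Type} (Z : T -> bset) (l : list T) :
  (forall a, AClass (Z a)) -> AClass (fun x => Forall (fun a => Z a x) l).
Proof.
  intros HZ. induction l as [|a l IH].
  - eapply A_ext; [|apply A_True]. intros x. split; auto.
  - eapply A_ext; [|apply (A_and _ _ (HZ a) IH)]. intros x. rewrite Forall_cons_iff. reflexivity.
Qed.

Lemma A_Exists {T : Type} (Z : T -> bset) (l : list T) :
  (forall a, AClass (Z a)) -> AClass (fun x => Exists (fun a => Z a x) l).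
Proof.
  intros HZ. induction l as [|a l IH].
  - eapply A_ext; [|apply A_False]. intros x. rewrite Exists_nil. reflexivity.
  - eapply A_ext; [|apply (A_or _ _ (HZ a) IH)]. intros x. rewrite Exists_cons. reflexivity.
Qed.

Lemma A_unique_witness {T : Type} (P : T -> Prop) (Z : T -> bset) :
  (forall c c', P c -> P c' -> c = c') -> (forall c, P c -> AClass (Z c)) ->
  AClass (fun x => exists c, P c /\ Z c x).
Proof.
  intros Huniq HZ. destruct (classic (exists c, P c)) as [[c Hc]|Hnone].
  - eapply A_ext; [|apply (HZ c Hc)]. intros x. split; [eauto|].
    intros [c' [Hc' Hx]]. rewrite (Huniq c c' Hc Hc'). exact Hx.
  - eapply A_ext; [|apply A_False]. intros x. split; [tauto|]. intros [c [Hc _]]; eauto.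
Qed.

Lemma A_precomp (xi : positive -> positive) (Y : bset) :
  AClass Y -> AClass (fun h => Y (fun j => h (xi j))).
Proof.
  intros [L HL]. set (relabel := fun l : bool * positive * positive =>
    let '(b, m, n) := l in (b, m, xi n)).
  assert (Hrelabel : forall l h, lit_sem (relabel l) h <-> lit_sem l (fun j => h (xi j)))
    by (intros [[b m] n] h; reflexivity).
  exists (map (map relabel) L). intros h.
  rewrite (HL _), Exists_map, !Exists_exists.
  setoid_rewrite Forall_map. setoid_rewrite Forall_forall. setoid_rewrite Hrelabel. reflexivity.
Qed.

Section Codes.
Variable p : positive -> positive -> positive.
Hypothesis Hp : is_pairing p.

Lemma code_inj (l1 l2 : list positive) : code p l1 = code p l2 -> l1 = l2.
Proof.
  destruct Hp as [p_neq1 [p_inj _]].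
  revert l2; induction l1 as [|a s IH]; intros [|c t] E; simpl in E; auto.
  - exfalso; apply (p_neq1 c (code p t)); auto.
  - exfalso; apply (p_neq1 a (code p s)); auto.
  - apply p_inj in E. destruct E as [-> E]. f_equal. auto.
Qed.

Lemma A_semSp (k : positive) : AClass (semSp p k).
Proof.
  assert (Hunique : forall b, forall mn mn' : positive * positive,
    k = code p [b; fst mn; snd mn] -> k = code p [b; fst mn'; snd mn'] -> mn = mn').
  { intros b [m n] [m' n'] E E'. rewrite E in E'. apply code_inj in E'.
    injection E'. intros -> ->. reflexivity. }
  eapply A_ext; [|apply A_or;
    [apply (A_unique_witness (fun mn => k = code p [1; fst mn; snd mn])
              (fun mn => lit_sem (false, fst mn, snd mn)))
    |apply (A_unique_witness (fun mn => k = code p [2; fst mn; snd mn])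
              (fun mn => lit_sem (true, fst mn, snd mn)))];
    eauto using A_lit].
  intros x. unfold semSp. split.
  - intros [[[m n] H]|[[m n] H]]; [left|right]; exists m, n; exact H.
  - intros [[m [n H]]|[m [n H]]]; [left|right]; exists (m, n); exact H.
Qed.

Lemma A_semSi (k : positive) : AClass (semSi p k).
Proof.
  apply (A_unique_witness (fun l => code p l = k) (fun l x => Forall (fun a => semSp p a x) l)).
  - intros l l' E E'. apply code_inj. congruence.
  - intros l _. apply A_Forall, A_semSp.
Qed.

Lemma A_semA (k : positive) : AClass (semA p k).
Proof.
  apply (A_unique_witness (fun l => code p l = k) (fun l x => Exists (fun a => semSi p a x) l)).
  - intros l l' E E'. apply code_inj. congruence.
  - intros l _. apply A_Exists, A_semSi.
Qed.

End Codes.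

Section Semantics.
Variable p : positive -> positive -> positive.

Lemma piSem_leaf_iff (f g x : Baire) : f 1 <> 1 ->
  (piSem p f g x <-> forall n, n <> 1 -> semA p (g n) x).
Proof.
  intros Hf. split; [|now apply pi_leaf].
  intros H; inversion H; subst; auto; contradiction.
Qed.

Lemma sigSem_leaf_iff (f g x : Baire) : f 1 <> 1 ->
  (sigSem p f g x <-> exists n, n <> 1 /\ semA p (g n) x).
Proof.
  intros Hf. split; [|intros [n [Hn H]]; eapply sig_leaf; eauto].
  intros H; inversion H; subst; eauto; contradiction.
Qed.

Lemma piSem_node_iff (f g x : Baire) : f 1 = 1 ->
  (piSem p f g x <-> forall n, sigSem p (sub p f n) (sub p g n) x).
Proof.
  intros Hf. split; [|now apply pi_node].
  intros H; inversion H; subst; auto; contradiction.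
Qed.

Lemma sigSem_node_iff (f g x : Baire) : f 1 = 1 ->
  (sigSem p f g x <-> exists n, piSem p (sub p f n) (sub p g n) x).
Proof.
  intros Hf. split; [|intros [n H]; eapply sig_node; eauto].
  intros H; inversion H; subst; eauto; contradiction.
Qed.

End Semantics.

Section Classes.
Variable p : positive -> positive -> positive.
Hypothesis Hp : is_pairing p.

Section Leaf.
Variables xi gam : positive -> positive.

Lemma piSem_leaf_precomp_PiC (f : Baire) : f 1 <> 1 ->
  PiC AClass (fun h => piSem p f (fun j => h (gam j)) (fun j => h (xi j))).
Proof.
  intros Hf.
  apply (PiC_countable Pos_pair_of_nat _ _
    (fun '(n, k) h => n <> 1 -> h (gam n) = k -> semA p k (fun j => h (xi j)))).
  - apply Pos_pair_of_nat_surj.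
  - intros [n k]. destruct (Pos.eq_dec n 1) as [->|Hn].
    + eapply A_ext; [|apply A_True]. intros h. split; [|trivial]. intros _ []. reflexivity.
    + eapply A_ext; [|apply (A_or _ _ (A_lit (false, k, gam n)) (A_precomp xi _ (A_semA p Hp k)))].
      intros h. simpl. destruct (Pos.eq_dec (h (gam n)) k); intuition.
  - intros h. rewrite piSem_leaf_iff by exact Hf. split.
    + intros H [n k] Hn <-. auto.
    + intros H n Hn. exact (H (n, h (gam n)) Hn eq_refl).
Qed.

Lemma sigSem_leaf_precomp_SigC (f : Baire) : f 1 <> 1 ->
  SigC AClass (fun h => sigSem p f (fun j => h (gam j)) (fun j => h (xi j))).
Proof.
  intros Hf.
  apply (SigC_countable Pos_pair_of_nat _ _
    (fun '(n, k) h => n <> 1 /\ h (gam n) = k /\ semA p k (fun j => h (xi j)))).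
  - apply Pos_pair_of_nat_surj.
  - intros [n k]. destruct (Pos.eq_dec n 1) as [->|Hn].
    + eapply A_ext; [|apply A_False]. intros h. split; [intros []|intros [[] _]]. reflexivity.
    + eapply A_ext; [|apply (A_and _ _ (A_lit (true, k, gam n)) (A_precomp xi _ (A_semA p Hp k)))].
      intros h. simpl. tauto.
  - intros h. rewrite sigSem_leaf_iff by exact Hf. split.
    + intros [n [Hn H]]. exists (n, h (gam n)). auto.
    + intros [[n k] [Hn [<- H]]]. eauto.
Qed.

End Leaf.

Lemma U_precomp_classes (f : Baire) (o : ord) : alpha_rel p f o ->
  forall xi gam : positive -> positive,
  PiC (SigH o) (fun h => piSem p f (fun j => h (gam j)) (fun j => h (xi j))) /\
  SigC (PiH o) (fun h => sigSem p f (fun j => h (gam j)) (fun j => h (xi j))).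
Proof.
  induction 1 as [f Hf | f o Hf _ IH]; intros xi gam; split.
  - exact (piSem_leaf_precomp_PiC xi gam f Hf).
  - exact (sigSem_leaf_precomp_SigC xi gam f Hf).
  - apply (PiC_countable Pos.of_nat _ _
      (fun n h => sigSem p (sub p f n) (fun m => h (gam (p n m))) (fun j => h (xi j)))).
    + apply Pos_of_nat_surj.
    + intros n. exists n. exact (proj2 (IH n xi (fun m => gam (p n m)))).
    + intros h. apply piSem_node_iff, Hf.
  - apply (SigC_countable Pos.of_nat _ _
      (fun n h => piSem p (sub p f n) (fun m => h (gam (p n m))) (fun j => h (xi j)))).
    + apply Pos_of_nat_surj.
    + intros n. exists n. exact (proj1 (IH n xi (fun m => gam (p n m)))).
    + intros h. apply sigSem_node_iff, Hf.
Qed.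

End Classes.

Theorem lemma5p24 (p : positive -> positive -> positive) (Hp : is_pairing p)
  (f : Baire) (Hf : Stp p f) (o : ord) (Ho : alpha_rel p f o) :
  PiC (SigH o) (UPi p f) /\ SigC (PiH o) (USig p f).
Proof.
  exact (U_precomp_classes p Hp f o Ho (p 1) (p 2)).
Qed.
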